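(* In the setting and for the adaptive regularized Newton method described in the context, suppose conditions (A.2)–(A.3) hold and that $z_k$ satisfies the Armijo condition. Then $\|z_k-x_k\|\le\frac{2\kappa_g}{\sigma_k-\kappa_H}$ whenever $\sigma_k>\kappa_H$.
   Context: Setting: $\mathcal E$ is a finite-dimensional real Euclidean space with inner product $\langle\cdot,\cdot\rangle$, norm $\|\cdot\|$; $\mathcal M\subset\mathcal E$ is a smooth embedded Riemannian submanifold of dimension $n$ with tangent spaces $\mathcal T_x\mathcal M$, tangent bundle $\mathcal T\mathcal M$, Riemannian metric $\langle\cdot,\cdot\rangle_x$ and norm $\|\cdot\|_x$. $f$ is a smooth real function on an open set of $\mathcal E$ containing $\mathrm{conv}(\mathcal M)$, with Euclidean gradient/Hessian $\nabla f,\nabla^2 f$ and Riemannian gradient/Hessian $\mathrm{grad}\, f,\mathrm{Hess}\, f$ of $f|_{\mathcal M}$. $R:\mathcal T\mathcal M\to\mathcal M$ is a smooth retraction ($R_x(0_x)=x$, $DR_x(0_x)=\mathrm{id}$). Adaptive regularized Newton method: fix $x_0\in\mathcal M$, $\sigma_0>0$, $0<\eta_1\le\eta_2<1$, $0<\gamma_0<1<\gamma_1\le\gamma_2$, $\rho,\delta\in(0,1)$, $\alpha_0\in(0,1]$, $T>0$, $\theta>1$, $\epsilon\ge0$, and symmetric linear operators $H_k$ on $\mathcal E$. At iteration $k$ let $m_k(x)=\langle\nabla f(x_k),x-x_k\rangle+\frac12\langle H_k(x-x_k),x-x_k\rangle+\frac{\sigma_k}2\|x-x_k\|^2$, $g:=\mathrm{grad}\,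 m_k(x_k)$ ($=\mathrm{grad}\, f(x_k)$) and $\mathcal H:=\mathrm{Hess}\, m_k(x_k)$ (Riemannian gradient and Hessian of $m_k|_{\mathcal M}$ at $x_k$). Modified CG (inner products/norms in $\langle\cdot,\cdot\rangle_{x_k}$): $\eta_0=0$, $r_0=g$, $p_0=-r_0$, $i=0$; while $i\le n-1$: $\pi_i=\langle p_i,\mathcal Hp_i\rangle$; if $\pi_i/\|p_i\|^2\le\epsilon$ then (if $i=0$: $s_k=p_0$, $d_k=0$; else $s_k=\eta_i$ and $d_k=p_i$ if $\pi_i/\|p_i\|^2\le-\epsilon$, $d_k=0$ otherwise) and stop; else $\alpha_i=\|r_i\|^2/\pi_i$, $\eta_{i+1}=\eta_i+\alpha_ip_i$, $r_{i+1}=r_i+\alpha_i\mathcal Hp_i$; if $\|r_{i+1}\|\le\min\{\|r_0\|^\theta,T\}$ then $s_k=\eta_{i+1}$, $d_k=0$ and stop; else $\beta_{i+1}=\|r_{i+1}\|^2/\|r_i\|^2$, $p_{i+1}=-r_{i+1}+\beta_{i+1}p_i$, $i\leftarrow i+1$. Then $\xi_k=s_k+\tau_kd_k$ with $\tau_k=\langle d_k,g\rangle/\langle d_k,\mathcal Hd_k\rangle$ if $d_k\ne0$, $\xi_k=s_k$ if $d_k=0$. Trial point: $\alpha_k=\alpha_0\delta^h$, $h$ the smallest nonnegative integer with $m_k(R_{x_k}(\alpha_0\delta^h\xi_k))\le\rho\alpha_0\delta^h\langle g,\xi_k\rangle_{x_k}$ (Armijo condition); $z_k=R_{x_k}(\alpha_k\xi_k)$;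 $\rho_k=(f(z_k)-f(x_k))/m_k(z_k)$; $x_{k+1}=z_k$ if $\rho_k\ge\eta_1$, else $x_{k+1}=x_k$; $\sigma_{k+1}\in(0,\gamma_0\sigma_k]$ if $\rho_k\ge\eta_2$, $\in[\gamma_0\sigma_k,\gamma_1\sigma_k]$ if $\eta_1\le\rho_k<\eta_2$, $\in[\gamma_1\sigma_k,\gamma_2\sigma_k]$ otherwise; the method stops if $\mathrm{grad}\, f(x_k)=0$. Conditions: (A.2) there is $\kappa_g>0$ with $\|\nabla f(x_k)\|\le\kappa_g$ for all $k$; (A.3) there is $\kappa_H>0$ with $\|H_k\|\le\kappa_H$ for all $k$. *)

From HB Require Import structures.
From mathcomp Require Import all_boot all_order all_algebra.
From mathcomp Require Import reals exp.
Set Implicit Arguments. Unset Strict Implicit. Unset Printing Implicit Defensive.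
Import Order.TTheory GRing.Theory Num.Theory.
Local Open Scope ring_scope.

Section ARNT.
Variables (R : realType) (N : nat).
Notation E := 'rV[R]_N.

(* Euclidean inner product and norm on E = R^N (any finite-dim Euclidean
   space is isometric to one of these). *)
Definition dot (u v : E) : R := \sum_(i < N) u 0 i * v 0 i.
Definition enorm (u : E) : R := Num.sqrt (dot u u).

(* the quadratic model m_k, with Euclidean gradient gf = grad f(x_k),
   H_k given by the matrix Hk acting as v |-> v *m Hk *)
Definition mk (gf xk : E) (Hk : 'M[R]_N) (sigma : R) (x : E) : R :=
  dot gf (x - xk) + 2^-1 * dot ((x - xk) *m Hk) (x - xk)
  + sigma / 2 * dot (x - xk) (x - xk).

(* Hs : the operator \mathcal H (v |-> Hs v),
   g : r_0, eps, theta, T the parameters.  [cg_loop k i eta r p] performs the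
   loop body with counter i, with k iterations left before the guard
   i <= n-1 fails.  Returns (s_k, d_k). *)
Fixpoint cg_loop (Hs : E -> E) (g : E) (eps theta T : R)
    (k i : nat) (eta r p : E) : E * E :=
  match k with
  | 0 => (eta, 0) (* loop guard exhausted: never reached in exact arithmetic *)
  | k'.+1 =>
    let pi := dot p (Hs p) in
    if pi / dot p p <= eps then
      if i == 0%N then (p, 0)
      else (eta, if pi / dot p p <= - eps then p else 0)
    else
      let alpha := dot r r / pi in
      let eta' := eta + alpha *: p in
      let r' := r + alpha *: Hs p in
      if enorm r' <= Num.min (powR (enorm g) theta) T then (eta', 0)
      else
        let beta := dot r' r' / dot r r in
        let p' := - r' + beta *: p in
        cg_loop Hs g eps theta T k' i.+1 eta' r' p'
  end.

Definition modCG (n : nat) (Hs : E -> E) (g : E) (eps theta T : R) : E * E :=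
  cg_loop Hs g eps theta T n 0 0 g (- g).

Definition xi_of (n : nat) (Hs : E -> E) (g : E) (eps theta T : R) : E :=
  let sd := modCG n Hs g eps theta T in
  if sd.2 == 0 then sd.1
  else sd.1 + (dot sd.2 g / dot sd.2 (Hs sd.2)) *: sd.2.

End ARNT.

From HB Require Import structures.
From mathcomp Require Import all_boot all_order all_algebra.
From mathcomp Require Import reals exp.
From mathcomp Require Import ring lra.
Import Order.TTheory GRing.Theory Num.Theory.
Local Open Scope ring_scope.
Set Implicit Arguments. Unset Strict Implicit.

(* The modified CG iteration keeps the classical CG relations, in particular
   <g, p_i> = -|r_i|^2, so each partial sum eta_i, hence s_k, is a descent
   direction; the negative-curvature correction tau_k d_k adds
   <g, d_k>^2 / <d_k, H d_k> <= 0.  So <g, xi_k> <= 0 and the Armijo condition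
   forces m_k(z_k) <= 0.  With u = z_k - x_k, (A.2)-(A.3) and Cauchy-Schwarz
   give m_k(z_k) >= -kappa_g |u| + (sigma - kappa_H)/2 |u|^2, whence the bound. *)

Section Dot.
Variables (R : realType) (N : nat).
Implicit Types u v w : 'rV[R]_N.

Lemma dotC u v : dot u v = dot v u.
Proof. by apply: eq_bigr => i _; rewrite mulrC. Qed.

Lemma dotDl u v w : dot (u + v) w = dot u w + dot v w.
Proof. by rewrite /dot -big_split; apply: eq_bigr => i _; rewrite mxE mulrDl. Qed.

Lemma dotZl a u w : dot (a *: u) w = a * dot u w.
Proof. by rewrite /dot mulr_sumr; apply: eq_bigr => i _; rewrite mxE mulrA. Qed.

Lemma dotNl u w : dot (- u) w = - dot u w.
Proof. by rewrite -scaleN1r dotZl mulN1r. Qed.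

Lemma dot0l w : dot 0 w = 0.
Proof. by rewrite -(scale0r 0) dotZl mul0r. Qed.

Lemma dotDr u v w : dot w (u + v) = dot w u + dot w v.
Proof. by rewrite dotC dotDl !(dotC w). Qed.

Lemma dotZr a u w : dot w (a *: u) = a * dot w u.
Proof. by rewrite dotC dotZl dotC. Qed.

Lemma dotNr u w : dot w (- u) = - dot w u.
Proof. by rewrite dotC dotNl dotC. Qed.

Lemma dot0r w : dot w 0 = 0.
Proof. by rewrite dotC dot0l. Qed.

Lemma dot_ge0 u : 0 <= dot u u.
Proof. by apply: sumr_ge0 => i _; rewrite -expr2 sqr_ge0. Qed.

Lemma dot_eq0 u : (dot u u == 0) = (u == 0).
Proof.
apply/idP/eqP => [|->]; last by rewrite dot0l.
rewrite psumr_eq0 => [/allP u0|i _]; last by rewrite -expr2 sqr_ge0.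
apply/rowP => i; apply/eqP; rewrite mxE -[_ == 0]orbb -mulf_eq0.
exact: u0 (mem_index_enum i).
Qed.

Lemma dot_gt0 u : (0 < dot u u) = (u != 0).
Proof. by rewrite lt_def dot_eq0 dot_ge0 andbT. Qed.

Lemma dot_sqr_le u v : dot u v ^+ 2 <= dot u u * dot v v.
Proof.
have [->|v0] := eqVneq v 0; first by rewrite !dot0r expr0n mulr0.
have vv_gt0 : 0 < dot v v by rewrite dot_gt0.
set t := - dot u v / dot v v.
(* expand 0 <= |u + t v|^2 at the minimising t *)
have := dot_ge0 (u + t *: v).
rewrite !dotDl !dotDr !dotZl !dotZr (dotC v u) => h.
rewrite -subr_ge0.
have -> : dot u u * dot v v - dot u v ^+ 2 =
    dot v v * (dot u u + t * dot u v + (t * dot u v + t * (t * dot v v))).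
  by rewrite /t; field; rewrite gt_eqF.
exact: mulr_ge0 (ltW vv_gt0) h.
Qed.

Lemma enorm_ge0 u : 0 <= enorm u.
Proof. exact: sqrtr_ge0. Qed.

Lemma sqr_enorm u : enorm u ^+ 2 = dot u u.
Proof. by rewrite sqr_sqrtr // dot_ge0. Qed.

Lemma enorm0 : enorm (0 : 'rV[R]_N) = 0.
Proof. by rewrite /enorm dot0l sqrtr0. Qed.

Lemma dot_le_enorm u v : `|dot u v| <= enorm u * enorm v.
Proof.
rewrite -sqrtrM ?dot_ge0 // -sqrtr_sqr ler_sqrt ?mulr_ge0 ?dot_ge0 //.
exact: dot_sqr_le.
Qed.

Lemma dot_ge_oppM u v : - (enorm u * enorm v) <= dot u v.
Proof. by have := dot_le_enorm u v; rewrite ler_norml => /andP[]. Qed.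

End Dot.

Section ModelBound.
Variables (R : realType) (N : nat) (gf xk : 'rV[R]_N) (Hk : 'M[R]_N).
Variables (sigma kappa_g kappa_H : R).
Hypothesis gf_le : enorm gf <= kappa_g.
Hypothesis Hk_le : forall v, enorm (v *m Hk) <= kappa_H * enorm v.

Lemma mk_lower_bound z :
  (sigma - kappa_H) / 2 * enorm (z - xk) ^+ 2 - kappa_g * enorm (z - xk)
  <= mk gf xk Hk sigma z.
Proof.
rewrite /mk; set u := z - xk; rewrite -sqr_enorm.
have u_ge0 := enorm_ge0 u.
have gf_term : - (kappa_g * enorm u) <= dot gf u.
  apply: le_trans (dot_ge_oppM gf u); rewrite lerN2.
  exact: ler_wpM2r gf_le.
have Hk_term : - (kappa_H * enorm u ^+ 2) <= dot (u *m Hk) u.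
  apply: le_trans (dot_ge_oppM _ u); rewrite lerN2 expr2 mulrA.
  exact: ler_wpM2r (Hk_le u).
lra.
Qed.

Lemma enorm_le_of_mk_le0 z : kappa_H < sigma -> mk gf xk Hk sigma z <= 0 ->
  enorm (z - xk) <= 2 * kappa_g / (sigma - kappa_H).
Proof.
move=> lt_kH_sigma mk_le0; have := le_trans (mk_lower_bound z) mk_le0.
set n := enorm (z - xk); have n_ge0 : 0 <= n := enorm_ge0 _.
have kg_ge0 : 0 <= kappa_g := le_trans (enorm_ge0 gf) gf_le.
rewrite ler_pdivlMr ?subr_gt0 //; nra.
Qed.
End ModelBound.

Section ModifiedCG.
Variables (R : realType) (N : nat) (Tx : {vspace 'rV[R]_N}) (Hs : 'M[R]_N).
Variables (g : 'rV[R]_N) (eps theta T : R).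
Hypothesis Hs_stable : forall v, v \in Tx -> v *m Hs \in Tx.
Hypothesis Hs_sym : forall u v, u \in Tx -> v \in Tx -> dot u (v *m Hs) = dot (u *m Hs) v.
Hypothesis eps_ge0 : 0 <= eps.
Hypothesis T_gt0 : 0 < T.

(* S is the span of the previous search directions p_0, ..., p_(i-1). *)
Record cg_inv (S : {vspace 'rV[R]_N}) (eta r p : 'rV[R]_N) : Prop := CgInv {
  cg_sub : (S <= Tx)%VS;
  cg_p_in : p \in Tx;
  cg_r_orth : forall v, v \in S -> dot v r = 0;
  cg_p_conj : forall v, v \in S -> dot v (p *m Hs) = 0;
  cg_krylov : forall v, v \in S -> v *m Hs \in (S + <[p]>)%VS;
  cg_r_in : r \in (S + <[p]>)%VS;
  cg_g_in : g \in (S + <[p]>)%VS;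
  cg_rp : dot r p = - dot r r;
  cg_gp : dot g p = - dot r r;
  cg_descent : dot g eta <= 0;
  cg_r_neq0 : r != 0 }.

Section Step.
Variables (S : {vspace 'rV[R]_N}) (eta r p : 'rV[R]_N).
Hypothesis inv : cg_inv S eta r p.
Let pi := dot p (p *m Hs).
Hypothesis pi_gt0 : 0 < pi.
Let alpha := dot r r / pi.
Let r' := r + alpha *: (p *m Hs).
Let beta := dot r' r' / dot r r.
Let p' := - r' + beta *: p.
Let K := (S + <[p]>)%VS.

Let rr_neq0 : dot r r != 0. Proof. by rewrite dot_eq0 (cg_r_neq0 inv). Qed.

Let alpha_neq0 : alpha != 0.
Proof. by rewrite /alpha mulf_eq0 invr_eq0 negb_or rr_neq0 gt_eqF. Qed.

Let alphaM_pi : alpha * pi = dot r r.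
Proof. by rewrite /alpha divfK ?gt_eqF. Qed.

Let K_sub : (K <= Tx)%VS.
Proof. by rewrite subv_add (cg_sub inv) -memvE (cg_p_in inv). Qed.

Let p_in_K : p \in K.
Proof. exact/(subvP (addvSr _ _))/memv_line. Qed.

Let r'_in_Tx : r' \in Tx.
Proof.
by rewrite memvD ?memvZ ?Hs_stable ?(cg_p_in inv) // (subvP K_sub) ?(cg_r_in inv).
Qed.

Let p'_in_Tx : p' \in Tx.
Proof. by rewrite memvD ?memvN ?memvZ ?(cg_p_in inv). Qed.

Lemma cg_residual_orth v : v \in K -> dot v r' = 0.
Proof.
case/memv_addP => u uS [w /vlineP[c ->] ->].
rewrite /r' dotDl !dotZl !dotDr !dotZr (cg_r_orth inv uS) (cg_p_conj inv uS).
by rewrite (dotC p r) (cg_rp inv) -/pi alphaM_pi; ring.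
Qed.

Let alphaM_Hp : alpha *: (p *m Hs) = r' - r.
Proof. by rewrite addrAC subrr add0r. Qed.

Let Hp_r' : dot (p *m Hs) r' = beta * pi.
Proof.
apply: (mulfI alpha_neq0); rewrite mulrCA alphaM_pi divfK //.
by rewrite -dotZl alphaM_Hp dotDl dotNl (cg_residual_orth (cg_r_in inv)) subr0.
Qed.

Lemma cg_direction_conj v : v \in K -> dot v (p' *m Hs) = 0.
Proof.
case/memv_addP => u uS [w /vlineP[c ->] ->].
have uTx : u \in Tx := subvP (cg_sub inv) _ uS.
rewrite dotDl dotZl (Hs_sym uTx p'_in_Tx) (Hs_sym (cg_p_in inv) p'_in_Tx).
rewrite !dotDr !dotNr !dotZr (cg_residual_orth (cg_krylov inv uS)).
rewrite -(Hs_sym uTx (cg_p_in inv)) (cg_p_conj inv uS) (dotC (p *m Hs) p) -/pi Hp_r'.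
ring.
Qed.

Let K_sub_next : (K <= K + <[p']>)%VS.
Proof. exact: addvSl. Qed.

Let r'_eq : beta *: p - p' = r'.
Proof. by rewrite /p' opprD opprK addrC subrK. Qed.

Let r'_in_next : r' \in (K + <[p']>)%VS.
Proof.
rewrite -r'_eq memvB ?memvZ //; first exact: subvP K_sub_next _ p_in_K.
exact: subvP (addvSr _ _) _ (memv_line p').
Qed.

Lemma cg_krylov_step v : v \in K -> v *m Hs \in (K + <[p']>)%VS.
Proof.
have Hp_eq : p *m Hs = alpha^-1 *: (r' - r).
  by rewrite -alphaM_Hp scalerA mulVf ?scale1r.
case/memv_addP => u uS [w /vlineP[c ->] ->].
rewrite mulmxDl -scalemxAl Hp_eq memvD ?memvZ ?memvB ?memvZ //.
  exact/(subvP K_sub_next)/(cg_krylov inv uS).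
exact/(subvP K_sub_next)/(cg_r_in inv).
Qed.

Lemma cg_step_descent : dot g (eta + alpha *: p) <= 0.
Proof.
rewrite dotDr dotZr (cg_gp inv) mulrN subr_le0.
apply: le_trans (cg_descent inv) _.
by rewrite mulr_ge0 ?dot_ge0 // divr_ge0 ?dot_ge0 ?ltW.
Qed.

Lemma cg_step : r' != 0 -> cg_inv K (eta + alpha *: p) r' p'.
Proof.
move=> r'_neq0; split => //.
- exact: cg_residual_orth.
- exact: cg_direction_conj.
- exact: cg_krylov_step.
- exact/(subvP K_sub_next)/(cg_g_in inv).
- by rewrite /p' dotDr dotNr dotZr (dotC r' p) (cg_residual_orth p_in_K) mulr0 addr0.
- rewrite /p' dotDr dotNr dotZr (cg_residual_orth (cg_g_in inv)) (cg_gp inv).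
  by rewrite oppr0 add0r mulrN divfK.
- exact: cg_step_descent.
Qed.
End Step.

Definition cg_out (sd : 'rV[R]_N * 'rV[R]_N) : Prop :=
  dot g sd.1 <= 0 /\ (sd.2 != 0 -> dot sd.2 (sd.2 *m Hs) <= 0).

Lemma cg_loop_out k i S eta r p : cg_inv S eta r p ->
  cg_out (cg_loop (fun v => v *m Hs) g eps theta T k i eta r p).
Proof.
elim: k i S eta r p => [|k IH] i S eta r p inv /=.
  by split; [exact: (cg_descent inv) | rewrite eqxx].
have gp_le0 : dot g p <= 0 by rewrite (cg_gp inv) oppr_le0 dot_ge0.
case: ifP => [curv_le|/negbT].
  case: ifP => _; first by split; rewrite //= eqxx.
  split; first exact: (cg_descent inv).
  case: ifP => [curv_neg p_neq0|_]; last by rewrite eqxx.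
  have neg_eps : - eps <= 0 by rewrite oppr_le0.
  by have := le_trans curv_neg neg_eps; rewrite pmulr_lle0 ?invr_gt0 ?dot_gt0.
rewrite -ltNge => /(le_lt_trans eps_ge0) curv_gt0.
have pi_gt0 : 0 < dot p (p *m Hs).
  have pp_gt0 : 0 < dot p p.
    rewrite lt_def dot_ge0 andbT; apply: contraTneq curv_gt0 => ->.
    by rewrite invr0 mulr0 ltxx.
  by move: curv_gt0; rewrite pmulr_lgt0 ?invr_gt0.
case: ifP => [_|/negbT r'_big].
  by split; [exact: cg_step_descent inv pi_gt0 | rewrite eqxx].
apply: IH; apply: (cg_step inv pi_gt0); apply: contraNneq r'_big => ->.
by rewrite enorm0 le_min powR_ge0 ltW.
Qed.

Section Start.
Hypothesis g_in : g \in Tx.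
Hypothesis g_neq0 : g != 0.

Lemma cg_inv0 : cg_inv 0 0 g (- g).
Proof.
have g_in_line : g \in (0 + <[- g]>)%VS.
  by rewrite add0v -{1}[g]opprK memvN memv_line.
split; rewrite ?sub0v ?memvN ?dotNr ?dot0r //.
- by move=> v; rewrite memv0 => /eqP ->; rewrite dot0l.
- by move=> v; rewrite memv0 => /eqP ->; rewrite dot0l.
- by move=> v; rewrite memv0 => /eqP ->; rewrite mul0mx mem0v.
Qed.

Lemma xi_descent n : dot g (xi_of n (fun v => v *m Hs) g eps theta T) <= 0.
Proof.
rewrite /xi_of /modCG.
case: (cg_loop _ _ _ _ _ _ _ _ _ _) (cg_loop_out n 0 cg_inv0) => s d [/= s_desc d_curv].
have [//|d_neq0] := eqVneq d 0.
rewrite dotDr dotZr (dotC d g) -[0]addr0 lerD // mulrAC -expr2.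
by rewrite mulr_ge0_le0 ?sqr_ge0 ?invr_le0 ?d_curv.
Qed.
End Start.
End ModifiedCG.

Unset Implicit Arguments.

Theorem lemma4p7 (R : realType) (N : nat)
    (* embedded manifold M in E = R^N, current iterate x_k in M *)
    (M : 'rV[R]_N -> Prop) (xk : 'rV[R]_N) (hxk : M xk)
    (* tangent space T_{x_k}M, a linear subspace of E with induced metric *)
    (Tx : {vspace 'rV[R]_N})
    (* retraction at x_k *)
    (Rx : 'rV[R]_N -> 'rV[R]_N) (hR0 : Rx 0 = xk)
    (hRM : forall v, v \in Tx -> M (Rx v))
    (* method parameters *)
    (sigma rho delta alpha0 T theta eps : R)
    (hsigma : 0 < sigma) (hrho : 0 < rho < 1) (hdelta : 0 < delta < 1)
    (halpha0 : 0 < alpha0 <= 1) (hT : 0 < T) (htheta : 1 < theta)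
    (heps : 0 <= eps)
    (* Euclidean gradient of f at x_k, symmetric H_k *)
    (gf : 'rV[R]_N) (Hk : 'M[R]_N) (hHk : Hk^T = Hk)
    (* g = grad m_k(x_k) = grad f(x_k): orthogonal projection of gf on Tx *)
    (g : 'rV[R]_N) (hgT : g \in Tx)
    (hgproj : forall v, v \in Tx -> dot (gf - g) v = 0)
    (hg0 : g != 0) (* the method has not stopped at iteration k *)
    (* \mathcal H = Hess m_k(x_k): self-adjoint linear operator on Tx *)
    (Hs : 'M[R]_N)
    (hHsT : forall v, v \in Tx -> v *m Hs \in Tx)
    (hHsym : forall u v, u \in Tx -> v \in Tx -> dot u (v *m Hs) = dot (u *m Hs) v)
    (* (A.2), (A.3) *)
    (kappa_g kappa_H : R) (hkg : 0 < kappa_g) (hkH : 0 < kappa_H)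
    (hA2 : enorm gf <= kappa_g)
    (hA3 : forall v, enorm (v *m Hk) <= kappa_H * enorm v)
    (* Armijo step: alpha_k = alpha0 delta^h, h smallest, z_k = R_{x_k}(alpha_k xi_k) *)
    (h : nat) (zk : 'rV[R]_N) :
    let xi := xi_of (\dim Tx) (fun v => v *m Hs) g eps theta T in
    let m := mk gf xk Hk sigma in
    (forall h' : nat, (h' < h)%N ->
       ~ (m (Rx ((alpha0 * delta ^+ h') *: xi)) <= rho * (alpha0 * delta ^+ h') * dot g xi)) ->
    zk = Rx ((alpha0 * delta ^+ h) *: xi) ->
    m zk <= rho * (alpha0 * delta ^+ h) * dot g xi ->
    kappa_H < sigma ->
    enorm (zk - xk) <= 2 * kappa_g / (sigma - kappa_H).
Proof.
move=> xi m _ -> armijo lt_kH_sigma.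
apply: (enorm_le_of_mk_le0 hA2 hA3 lt_kH_sigma); apply: le_trans armijo _.
have /andP[rho_gt0 _] := hrho; have /andP[delta_gt0 _] := hdelta.
have /andP[alpha0_gt0 _] := halpha0.
apply: mulr_ge0_le0; first by rewrite !mulr_ge0 ?exprn_ge0 ?ltW.
exact (xi_descent theta hHsT hHsym heps hT hgT hg0 _).
Qed.
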